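(* Let $T \in \mathbb{R}^{n_1} \otimes \mathbb{R}^{n_2} \otimes \mathbb{R}^{n_3}$ be a real tensor. Then \[ Q(T) \geq \left\lfloor \sqrt{Q_{\mathbb{C}}(T)} \right\rfloor. \]
   Context: For $r \geq 0$ let $I_r := \sum_{j=1}^r e_j \otimes e_j \otimes e_j \in \mathbb{R}^r\otimes\mathbb{R}^r\otimes\mathbb{R}^r$ (the $r$-th unit tensor; $e_j$ the standard basis vectors). The (real) subrank of $T \in \mathbb{R}^{n_1} \otimes \mathbb{R}^{n_2} \otimes \mathbb{R}^{n_3}$ is $Q(T) := \max\{ r \mid \exists\ \mathbb{R}\text{-linear maps } \varphi_i : \mathbb{R}^{n_i} \to \mathbb{R}^r \text{ with } (\varphi_1 \otimes \varphi_2 \otimes \varphi_3) T = I_r\}$. The complex subrank $Q_{\mathbb{C}}(T)$ of the real tensor $T$ is defined in the same way but allowing $\mathbb{C}$-linear maps $\varphi_i : \mathbb{C}^{n_i} \to \mathbb{C}^r$ (with $T$ viewed in $\mathbb{C}^{n_1}\otimes\mathbb{C}^{n_2}\otimes\mathbb{C}^{n_3}$ and $I_r$ the complex unit tensor). *)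

From HB Require Import structures.
From mathcomp Require Import all_boot all_order all_algebra.
From mathcomp Require Import boolp reals.
From mathcomp Require Import complex.
Set Implicit Arguments. Unset Strict Implicit. Unset Printing Implicit Defensive.
Import Order.TTheory GRing.Theory Num.Theory.
Local Open Scope ring_scope.

Definition tensor (K : Type) (n1 n2 n3 : nat) := 'I_n1 -> 'I_n2 -> 'I_n3 -> K.

Definition unit_tensor (K : pzRingType) (r : nat) : tensor K r r r :=
  fun a b c => ((a == b) && (b == c))%:R.

(* (phi1 (x) phi2 (x) phi3) T, where phi_i : K^{n_i} -> K^r is given by
   its matrix (phi_i e_j = column j). *)
Definition tensor_map (K : pzRingType) (n1 n2 n3 m1 m2 m3 : nat)
  (A : 'M[K]_(m1, n1)) (B : 'M[K]_(m2, n2)) (C : 'M[K]_(m3, n3))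
  (T : tensor K n1 n2 n3) : tensor K m1 m2 m3 :=
  fun a b c => \sum_(i < n1) \sum_(j < n2) \sum_(k < n3)
                 A a i * B b j * C c k * T i j k.

Definition restricts_to_unit (K : pzRingType) (n1 n2 n3 : nat)
  (T : tensor K n1 n2 n3) (r : nat) : Prop :=
  exists (A : 'M[K]_(r, n1)) (B : 'M[K]_(r, n2)) (C : 'M[K]_(r, n3)),
    tensor_map A B C T = @unit_tensor K r.

(* Subrank over K: the largest r such that T restricts to I_r.
   Such r always satisfies r <= n1 (flattening rank), so the max may be
   taken over r <= n1; r = 0 always qualifies. *)
Definition subrank (K : pzRingType) (n1 n2 n3 : nat) (T : tensor K n1 n2 n3)
  : nat :=
  (\max_(r < n1.+1 | `[< restricts_to_unit T r >]) r)%N.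

Definition complexify (R : rcfType) (n1 n2 n3 : nat) (T : tensor R n1 n2 n3)
  : tensor R[i] n1 n2 n3 :=
  fun i j k => ((T i j k)%:C)%C.

Definition Q (R : realType) (n1 n2 n3 : nat) (T : tensor R n1 n2 n3) : nat :=
  subrank T.
Definition Q_C (R : realType) (n1 n2 n3 : nat) (T : tensor R n1 n2 n3) : nat :=
  subrank (complexify T).

(* If the complexification of T restricts to I_r with s^2 <= r, it also restricts over C
   to P_s := pair_tensor s s = sum_(b,c) e_(b,c) (x) e_b (x) e_c, whose first flattening is the
   s^2 x s^2 identity matrix. Split the complex restriction maps as X + 'i Y with X, Y real:
   the determinant of the flattening of the image of T under the maps X + t Y is a
   polynomial in t that does not vanish at t = 'i, hence not at some real t. The image of T
   under these real maps has an invertible flattening, so one more real map on the first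
   factor turns it into P_s, and P_s restricts to I_s by keeping the diagonal pairs (a, a). *)

From HB Require Import structures.
From mathcomp Require Import all_boot all_order all_algebra.
From mathcomp Require Import boolp reals.
From mathcomp Require Import complex ring.
From Stdlib Require Import PeanoNat.
Set Implicit Arguments. Unset Strict Implicit. Unset Printing Implicit Defensive.
Import Order.TTheory GRing.Theory Num.Theory.
Local Open Scope ring_scope.

Lemma sum_delta (K : pzSemiRingType) (I : finType) (x : I) (F : I -> K) :
  \sum_i (x == i)%:R * F i = F x.
Proof.
rewrite (bigD1 x) //= eqxx mul1r big1 ?addr0 // => i; rewrite eq_sym => /negbTE->.
by rewrite mul0r.
Qed.

Lemma eq_mxvec_index m n (i i' : 'I_m) (j j' : 'I_n) :
  (mxvec_index i j == mxvec_index i' j') = (i == i') && (j == j').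
Proof.
by rewrite (inj_eq (@cast_ord_inj _ _ _)) (inj_eq (@enum_rank_inj _)) xpair_eqE.
Qed.

Lemma sum3E (K : nmodType) (I J L : finType) (F : I -> J -> L -> K) :
  \sum_(p : I * J * L) F p.1.1 p.1.2 p.2 = \sum_i \sum_j \sum_l F i j l.
Proof.
rewrite -(pair_bigA _ (fun q l => F q.1 q.2 l)).
by rewrite -(pair_bigA _ (fun i j => \sum_l F i j l)).
Qed.

Lemma mulr_sum3 (K : pzSemiRingType) (I J L : finType)
    (f : I -> K) (g : J -> K) (h : L -> K) :
  (\sum_i f i) * (\sum_j g j) * (\sum_l h l) =
  \sum_(p : I * J * L) f p.1.1 * g p.1.2 * h p.2.
Proof.
rewrite (sum3E (fun i j l => f i * g j * h l)).
rewrite -mulrA mulr_suml; apply: eq_bigr => i _.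
rewrite mulr_suml mulr_sumr; apply: eq_bigr => j _.
by rewrite !mulr_sumr; apply: eq_bigr => l _; rewrite !mulrA.
Qed.

Definition restricts_to (K : pzRingType) (n1 n2 n3 m1 m2 m3 : nat)
  (T : tensor K n1 n2 n3) (U : tensor K m1 m2 m3) : Prop :=
  exists (A : 'M[K]_(m1, n1)) (B : 'M[K]_(m2, n2)) (C : 'M[K]_(m3, n3)),
    tensor_map A B C T = U.

Definition map_tensor (K K' : Type) (f : K -> K') (n1 n2 n3 : nat)
  (T : tensor K n1 n2 n3) : tensor K' n1 n2 n3 :=
  fun i j k => f (T i j k).

Definition flatten (K : Type) (n1 n2 n3 : nat) (T : tensor K n1 n2 n3)
  : 'M[K]_(n1, n2 * n3) :=
  \matrix_i mxvec (\matrix_(j, k) T i j k).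

Definition pair_tensor (K : pzRingType) (m n : nat) : tensor K (m * n) m n :=
  fun k b c => (k == mxvec_index b c)%:R.

Section TensorMaps.
Variable K : comPzRingType.

Lemma flattenE n1 n2 n3 (T : tensor K n1 n2 n3) i j k :
  flatten T i (mxvec_index j k) = T i j k.
Proof. by rewrite /flatten !mxE mxvecE mxE. Qed.

Lemma flatten_inj n1 n2 n3 : injective (@flatten K n1 n2 n3).
Proof.
move=> T U eqTU; apply: funext => i; apply: funext => j; apply: funext => k.
by rewrite -!flattenE eqTU.
Qed.

Lemma tensor_map_comp n1 n2 n3 m1 m2 m3 p1 p2 p3
    (A : 'M[K]_(p1, m1)) (B : 'M[K]_(p2, m2)) (C : 'M[K]_(p3, m3))
    (A' : 'M[K]_(m1, n1)) (B' : 'M[K]_(m2, n2)) (C' : 'M[K]_(m3, n3))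
    (T : tensor K n1 n2 n3) :
  tensor_map A B C (tensor_map A' B' C' T) =
  tensor_map (A *m A') (B *m B') (C *m C') T.
Proof.
apply: funext => a; apply: funext => b; apply: funext => c; rewrite /tensor_map.
rewrite -sum3E -[RHS]sum3E.
under eq_bigr => p _ do rewrite -sum3E mulr_sumr.
under [RHS]eq_bigr => q _ do rewrite !mxE mulr_sum3 mulr_suml.
rewrite exchange_big; apply: eq_bigr => p _; apply: eq_bigr => q _ /=.
by ring.
Qed.

Lemma restricts_to_trans n1 n2 n3 m1 m2 m3 p1 p2 p3 (T : tensor K n1 n2 n3)
    (U : tensor K m1 m2 m3) (V : tensor K p1 p2 p3) :
  restricts_to T U -> restricts_to U V -> restricts_to T V.
Proof.
move=> [A' [B' [C' <-]]] [A [B [C <-]]].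
by exists (A *m A'), (B *m B'), (C *m C'); rewrite tensor_map_comp.
Qed.

Lemma tensor_map1E n1 n2 n3 m (A : 'M[K]_(m, n1)) (T : tensor K n1 n2 n3) a b c :
  tensor_map A 1%:M 1%:M T a b c = \sum_i A a i * T i b c.
Proof.
apply: eq_bigr => i _; rewrite (bigD1 b) //= [X in _ + X]big1 ?addr0 => [|j /negbTE jb].
  rewrite (bigD1 c) //= [X in _ + X]big1 ?addr0 => [|k /negbTE kc].
    by rewrite !mxE !eqxx !mulr1.
  by rewrite !mxE eq_sym kc mulr0 mul0r.
by apply: big1 => k _; rewrite !mxE eq_sym jb mulr0 !mul0r.
Qed.

Lemma flatten_tensor_map1 n1 n2 n3 m (A : 'M[K]_(m, n1)) (T : tensor K n1 n2 n3) :
  flatten (tensor_map A 1%:M 1%:M T) = A *m flatten T.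
Proof.
apply/matrixP => a k; case/mxvec_indexP: k => b c.
by rewrite flattenE tensor_map1E mxE; apply: eq_bigr => i _; rewrite flattenE.
Qed.

Lemma tensor_map_unit m1 m2 m3 r (A : 'M[K]_(m1, r)) (B : 'M[K]_(m2, r))
    (C : 'M[K]_(m3, r)) a b c :
  tensor_map A B C (@unit_tensor K r) a b c = \sum_i A a i * B b i * C c i.
Proof.
apply: eq_bigr => i _; rewrite (bigD1 i) //= [X in _ + X]big1 ?addr0 => [|j /negbTE ji].
  rewrite (bigD1 i) //= [X in _ + X]big1 ?addr0 => [|k /negbTE ki].
    by rewrite /unit_tensor eqxx mulr1.
  by rewrite /unit_tensor eqxx eq_sym ki mulr0.
by apply: big1 => k _; rewrite /unit_tensor eq_sym ji mulr0.
Qed.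

Lemma unit_tensorE r a b c : @unit_tensor K r a b c = ((b == a) && (c == a))%:R.
Proof. by rewrite /unit_tensor [b == a]eq_sym [c == a]eq_sym; case: eqP => // <-. Qed.

Lemma flatten_pair_tensor m n : flatten (@pair_tensor K m n) = 1%:M.
Proof.
by apply/matrixP => k l; case/mxvec_indexP: l => b c; rewrite flattenE mxE.
Qed.

Lemma restricts_unit_leq m r :
  (m <= r)%N -> restricts_to (@unit_tensor K r) (@unit_tensor K m).
Proof.
move=> le_mr; pose W : 'M[K]_(m, r) := \matrix_(a, i) (widen_ord le_mr a == i)%:R.
exists W, W, W; apply: funext => a; apply: funext => b; apply: funext => c.
rewrite tensor_map_unit; under eq_bigr => i _ do rewrite [W a i]mxE -mulrA.
rewrite sum_delta !mxE unit_tensorE -natrM mulnb.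
by rewrite -!(inj_eq val_inj).
Qed.

Lemma restricts_unit_pair m n :
  restricts_to (@unit_tensor K (m * n)) (@pair_tensor K m n).
Proof.
pose B : 'M[K]_(m, m * n) := \matrix_(b, k) mxvec (\matrix_(b', c) (b' == b)%:R) 0 k.
pose C : 'M[K]_(n, m * n) := \matrix_(c, k) mxvec (\matrix_(b, c') (c' == c)%:R) 0 k.
exists 1%:M, B, C; apply: funext => k; case/mxvec_indexP: k => b' c'.
apply: funext => b; apply: funext => c.
rewrite tensor_map_unit; under eq_bigr => i _ do rewrite [1%:M _ i]mxE -mulrA.
by rewrite sum_delta !mxE !mxvecE !mxE /pair_tensor eq_mxvec_index -natrM mulnb.
Qed.

Lemma restricts_pair_unit n :
  restricts_to (@pair_tensor K n n) (@unit_tensor K n).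
Proof.
pose D : 'M[K]_(n, n * n) := \matrix_(a, k) (k == mxvec_index a a)%:R.
exists D, 1%:M, 1%:M; apply: flatten_inj.
rewrite flatten_tensor_map1 flatten_pair_tensor mulmx1.
apply/matrixP => a k; case/mxvec_indexP: k => b c.
by rewrite flattenE mxE unit_tensorE eq_mxvec_index.
Qed.

End TensorMaps.

Lemma restricts_pair_of_unitmx (K : fieldType) m n (U : tensor K (m * n) m n) :
  flatten U \in unitmx -> restricts_to U (@pair_tensor K m n).
Proof.
move=> U_unit; exists (invmx (flatten U)), 1%:M, 1%:M; apply: flatten_inj.
by rewrite flatten_tensor_map1 mulVmx // flatten_pair_tensor.
Qed.

Section TensorMorphism.
Variables (K K' : comPzRingType) (f : {rmorphism K -> K'}).

Lemma map_tensor_map n1 n2 n3 m1 m2 m3 (A : 'M[K]_(m1, n1)) (B : 'M[K]_(m2, n2))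
    (C : 'M[K]_(m3, n3)) (T : tensor K n1 n2 n3) :
  map_tensor f (tensor_map A B C T) =
  tensor_map (map_mx f A) (map_mx f B) (map_mx f C) (map_tensor f T).
Proof.
apply: funext => a; apply: funext => b; apply: funext => c.
rewrite /map_tensor rmorph_sum; apply: eq_bigr => i _.
rewrite rmorph_sum; apply: eq_bigr => j _.
rewrite rmorph_sum; apply: eq_bigr => k _.
by rewrite !rmorphM !mxE.
Qed.

Lemma det_flatten_map_tensor m n (U : tensor K (m * n) m n) :
  f (\det (flatten U)) = \det (flatten (map_tensor f U)).
Proof.
rewrite -det_map_mx; congr (\det _); apply/matrixP => a k.
by case/mxvec_indexP: k => b c; rewrite mxE !flattenE.
Qed.

End TensorMorphism.

Section Realification.
Variable R : rcfType.
Local Open Scope complex_scope.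

Lemma exists_nonroot_real (p : {poly R[i]}) :
  p != 0 -> exists x : R, ~~ root p x%:C.
Proof.
move=> p_neq0; have [//|no_nonroot] := pselect (exists x : R, ~~ root p x%:C).
exfalso; move/eqP: p_neq0; apply.
apply: (@roots_geq_poly_eq0 _ _ [seq (k%:R)%:C | k <- iota 0 (size p)]).
- apply/allP => _ /mapP[k _ ->]; apply/negPn/negP => k_nonroot.
  by apply: no_nonroot; exists k%:R.
- rewrite map_inj_uniq ?iota_uniq // => k l /complexI/eqP.
  by rewrite eqr_nat => /eqP.
- by rewrite size_map size_iota.
Qed.

Definition re_im_pencil m n (X : 'M[R[i]]_(m, n)) : 'M[{poly R[i]}]_(m, n) :=
  \matrix_(a, b) ((complex.Re (X a b))%:C%:P + 'X * (complex.Im (X a b))%:C%:P).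

Lemma map_re_im_pencil_i m n (X : 'M[R[i]]_(m, n)) :
  map_mx (horner_eval 'i) (re_im_pencil X) = X.
Proof. by apply/matrixP => a b; rewrite !mxE /horner_eval !hornerE -complexE. Qed.

Lemma map_re_im_pencil_real (t : R) m n (X : 'M[R[i]]_(m, n)) :
  map_mx (horner_eval t%:C) (re_im_pencil X) =
  map_mx (real_complex R) (map_mx (fun z => complex.Re z + t * complex.Im z) X).
Proof. by apply/matrixP => a b; rewrite !mxE /horner_eval !hornerE rmorphD rmorphM. Qed.

Lemma restricts_nonsingular_of_complex n1 n2 n3 m n (T : tensor R n1 n2 n3)
    (U : tensor R[i] (m * n) m n) :
  restricts_to (complexify T) U -> \det (flatten U) != 0 ->
  exists2 V : tensor R (m * n) m n, restricts_to T V & \det (flatten V) != 0.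
Proof.
move=> [A [B [C defU]]] detU_neq0.
pose P := \det (flatten (tensor_map (re_im_pencil A) (re_im_pencil B) (re_im_pencil C)
                          (map_tensor polyC (complexify T)))).
have evalP t : horner_eval t P = \det (flatten (tensor_map
    (map_mx (horner_eval t) (re_im_pencil A)) (map_mx (horner_eval t) (re_im_pencil B))
    (map_mx (horner_eval t) (re_im_pencil C)) (complexify T))).
  rewrite det_flatten_map_tensor map_tensor_map.
  congr (\det (flatten (tensor_map _ _ _ _))).
  by apply: funext => i; apply: funext => j; apply: funext => k; apply: hornerC.
have P_neq0 : P != 0.
  apply: contraNneq detU_neq0 => P0.
  rewrite -defU -[A]map_re_im_pencil_i -[B]map_re_im_pencil_i -[C]map_re_im_pencil_i.
  by rewrite -evalP P0 rmorph0.
have [x Px_neq0] := exists_nonroot_real P_neq0.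
pose re_im_at X := map_mx (fun z => complex.Re z + x * complex.Im z) X.
exists (tensor_map (re_im_at _ _ A) (re_im_at _ _ B) (re_im_at _ _ C) T).
  by exists (re_im_at _ _ A), (re_im_at _ _ B), (re_im_at _ _ C).
apply: contraNneq Px_neq0 => V0.
rewrite /root -[P.[_]]/(horner_eval _ P) evalP !map_re_im_pencil_real.
by rewrite -map_tensor_map -det_flatten_map_tensor V0 rmorph0.
Qed.

Lemma restricts_pair_of_complex n1 n2 n3 m n (T : tensor R n1 n2 n3) :
  restricts_to (complexify T) (@pair_tensor R[i] m n) ->
  restricts_to T (@pair_tensor R m n).
Proof.
move=> TC_pair; have [|V TV detV_neq0] := restricts_nonsingular_of_complex TC_pair.
  by rewrite flatten_pair_tensor det1 oner_neq0.
by apply: restricts_to_trans TV (restricts_pair_of_unitmx _); rewrite unitmxE unitfE.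
Qed.

End Realification.

Section Subrank.
Variables (K : pzRingType) (n1 n2 n3 : nat) (T : tensor K n1 n2 n3).

Lemma subrank_restricts : restricts_to T (@unit_tensor K (subrank T)).
Proof.
have unit0 : `[< restricts_to T (@unit_tensor K (@ord0 n1)) >].
  by apply/asboolP; exists 0, 0, 0; apply: funext => -[].
rewrite /subrank (bigop.bigmax_eq_arg ord0 unit0).
by case: arg_maxnP => // r /asboolP.
Qed.

Lemma subrank_leq_dim : (subrank T <= n1)%N.
Proof. by apply/bigmax_leqP => r _; rewrite -ltnS. Qed.

Lemma leq_subrank r :
  (r <= n1)%N -> restricts_to T (@unit_tensor K r) -> (r <= subrank T)%N.
Proof.
rewrite -ltnS => lt_r_n1 T_r.
by apply: (leq_bigmax_cond (Ordinal lt_r_n1)); apply/asboolP.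
Qed.

End Subrank.

Theorem theorem2p2 (R : realType) (n1 n2 n3 : nat) (T : tensor R n1 n2 n3) :
  (Nat.sqrt (Q_C T) <= Q T)%N.
Proof.
set r := Q_C T; set s := Nat.sqrt r.
have le_ss_r : (s * s <= r)%N by case: (Nat.sqrt_spec' r) => /ssrnat.leP.
have TC_pair : restricts_to (complexify T) (@pair_tensor R[i] s s).
  apply: restricts_to_trans (subrank_restricts _) _.
  exact: restricts_to_trans (restricts_unit_leq _ le_ss_r) (restricts_unit_pair _ _ _).
apply: leq_subrank.
  have le_s_ss : (s <= s * s)%N by case: (posnP s) => [->|s_gt0] //; rewrite leq_pmulr.
  exact: leq_trans le_s_ss (leq_trans le_ss_r (subrank_leq_dim _)).
exact: restricts_to_trans (restricts_pair_of_complex TC_pair) (restricts_pair_unit _ _).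
Qed.
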